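(* Let $n\ge5$ and let $C=(1,c_2,\dots,c_{n-1},2c_{n-1}-c_2)$ be a system with $n$ coin types, with subsystem $C'=(1,c_2,\dots,c_{n-1})$. Then $C$ is canonical and $C'$ is noncanonical if and only if $C=(1,2,\dots,n-3,c_{n-2},c_{n-2}+1,2c_{n-2})$ and $c_{n-2}>n-2$.
   Context: A system is a tuple $C=(c_1,\dots,c_n)$ of integers with $1=c_1<c_2<\dots<c_n$; for $k\le n$, $(c_1,\dots,c_k)$ is a subsystem. For a positive integer $v$, $\mathrm{opt}_C(v)$ is the minimum of $\sum_i x_i$ over $x\in\mathbb{Z}_{\ge0}^n$ with $\sum_i c_ix_i=v$. The greedy representation of $v$ is produced by: for $i=n$ down to $1$, while $c_i\le$ remaining value, take a coin $c_i$. $\mathrm{grd}_C(v)$ is its number of coins. A positive integer $w$ is a counterexample if $\mathrm{opt}_C(w)<\mathrm{grd}_C(w)$; $C$ is canonical if it has none, noncanonical otherwise. *)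

(* Coin systems are represented as sequences of naturals:
   C = [:: c_1; ...; c_n], so c_i = nth 0 C i.-1. *)
From mathcomp Require Import all_boot.
Set Implicit Arguments. Unset Strict Implicit. Unset Printing Implicit Defensive.

Definition is_system (C : seq nat) : bool :=
  (head 0 C == 1) && sorted ltn C.

Definition is_rep (C : seq nat) (v : nat) (x : seq nat) : Prop :=
  size x = size C /\ \sum_(i < size C) nth 0 C i * nth 0 x i = v.

Definition ncoins (x : seq nat) : nat := sumn x.

Definition is_opt (C : seq nat) (v k : nat) : Prop :=
  (exists x, is_rep C v x /\ ncoins x = k) /\
  (forall x, is_rep C v x -> k <= ncoins x).

(* Greedy: process coins from largest to smallest; for coin c, the loop
   "while c <= remaining, take c" takes (rem %/ c) coins, leaving rem %% c. *)
Fixpoint grd_desc (s : seq nat) (v : nat) : nat :=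
  match s with
  | [::] => 0
  | c :: s' => v %/ c + grd_desc s' (v %% c)
  end.

Definition grd (C : seq nat) (v : nat) : nat := grd_desc (rev C) v.

Definition counterexample (C : seq nat) (w : nat) : Prop :=
  0 < w /\ exists k, is_opt C w k /\ k < grd C w.

Definition canonical (C : seq nat) : Prop :=
  forall w, ~ counterexample C w.

Definition noncanonical (C : seq nat) : Prop :=
  exists w, counterexample C w.

(* Backward direction: for C = (1, ..., m, b, b+1, 2b) the greedy count of w = 2bq + r is
   q + F(r) for an explicit F, and one checks grd(w) <= grd(w - u) + 1 for every coin u,
   which forces canonicity by induction on the number of coins.  In C' the sum b + b beats
   greedy, which pays b+1 and then b-1 > m, not a coin.
   Forward direction: let w be a minimal counterexample of C' with an optimal
   representation x.  Greedy agrees on C and C' below e = c_n and C is canonical, so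
   w >= e.  Minimality shows that x avoids d = c_(n-1) and that w < u + d for every coin u
   used by x; canonicity of C on the two-coin sum u + d then forces u + d = e + 1.  So all
   coins of x equal d - c_2 + 1, and e <= w < (d - c_2 + 1) + d leaves exactly two of
   them, whence c_2 = 2, d = c_(n-2) + 1, e = 2 c_(n-2), and c_(n-2) - 1 is not a coin
   since 2 c_(n-2) beats greedy.  Finally, canonicity of C on v + c_(n-2) shows that the
   coins below c_(n-2) are closed under predecessor, hence are 1, ..., n-3. *)

From mathcomp Require Import all_boot zify.
From Stdlib Require Import Classical.
Set Implicit Arguments. Unset Strict Implicit. Unset Printing Implicit Defensive.

Lemma ex_minimal (P : nat -> Prop) n : P n -> exists m, P m /\ forall k, P k -> m <= k.
Proof.
move=> Pn; apply: NNPP => no_min; elim/ltn_ind: n Pn => n IH Pn; apply: no_min.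
by exists n; split=> // k Pk; rewrite leqNgt; apply/negP => /IH; apply.
Qed.

Lemma ncoins_incr x i : i < size x -> ncoins (incr_nth x i) = (ncoins x).+1.
Proof. by elim: x i => [|a x IH] [|i] //= i_lt; rewrite IH // addnS. Qed.

Lemma rep_incr C v x i :
  is_rep C v x -> i < size C -> is_rep C (v + nth 0 C i) (incr_nth x i).
Proof.
move=> [size_x <-] i_lt; split; first by rewrite size_incr_nth size_x i_lt.
under eq_bigr => j _ do rewrite nth_incr_nth mulnDr.
rewrite big_split /= addnC; congr (_ + _).
rewrite (bigD1 (Ordinal i_lt)) //= eqxx muln1 big1 ?addn0 // => j.
by rewrite -val_eqE /= eq_sym => /negbTE->; rewrite muln0.
Qed.

Lemma rep_used_lt C v x i : is_rep C v x -> 0 < nth 0 x i -> i < size C.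
Proof.
by move=> [<- _] xi_gt0; rewrite ltnNge; apply: contraTN xi_gt0 => /(nth_default 0)->.
Qed.

Lemma rep_decr C v x i : is_rep C v x -> 0 < nth 0 x i ->
  exists y, [/\ is_rep C (v - nth 0 C i) y, ncoins x = (ncoins y).+1 & nth 0 C i <= v].
Proof.
move=> x_rep xi_gt0; have i_ltC := rep_used_lt x_rep xi_gt0.
case: x_rep => size_x val_x; have i_lt : i < size x by rewrite size_x.
set y := set_nth 0 x i (nth 0 x i).-1.
have size_y : size y = size x by rewrite size_set_nth; apply/maxn_idPr.
have x_eq : x = incr_nth y i.
  apply: (@eq_from_nth _ 0); first by rewrite size_incr_nth size_y i_lt.
  move=> j _; rewrite nth_incr_nth nth_set_nth /=.
  by case: (eqVneq j i) => [->|] //=; rewrite add1n prednK.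
pose w := \sum_(j < size C) nth 0 C j * nth 0 y j.
have y_rep : is_rep C w y by split; rewrite ?size_y.
have [_] := rep_incr y_rep i_ltC; rewrite -x_eq val_x => v_eq.
exists y; split; last by lia.
- by rewrite v_eq addnK.
- by rewrite x_eq ncoins_incr ?size_y.
Qed.

Lemma rep_nseq0 C : is_rep C 0 (nseq (size C) 0).
Proof. by split; rewrite ?size_nseq // big1 // => i _; rewrite nth_nseq if_same muln0. Qed.

Lemma rep_rcons C c v x k :
  is_rep C v x -> is_rep (rcons C c) (v + c * k) (rcons x k).
Proof.
move=> [size_x <-]; split; first by rewrite !size_rcons size_x.
rewrite size_rcons big_ord_recr /= !nth_rcons size_x ltnn eqxx.
by congr (_ + _); apply: eq_bigr => j _; rewrite !nth_rcons size_x ltn_ord.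
Qed.

Lemma rep_pos C v x : is_rep C v x -> 0 < v -> exists2 i, i < size C & 0 < nth 0 x i.
Proof.
move=> [_ <-]; case: (pickP (fun i : 'I_(size C) => 0 < nth 0 x i)) => [i xi_gt0 _|none].
  by exists i.
by rewrite big1 // => i _; move/negbT: (none i); rewrite -leqNgt leqn0 => /eqP->; rewrite muln0.
Qed.

Lemma rep_const_coin C v x u : is_rep C v x ->
  (forall i, i < size C -> 0 < nth 0 x i -> nth 0 C i = u) -> v = u * ncoins x.
Proof.
move=> [size_x <-] used_u; rewrite /ncoins sumnE (big_nth 0) big_mkord size_x big_distrr.
by apply: eq_bigr => i _ /=; case: (posnP (nth 0 x i)) => [->|/(used_u _ (ltn_ord i))->]; rewrite ?muln0.
Qed.

Lemma rep_pair C u u' : u \in C -> u' \in C ->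
  exists2 x, is_rep C (u + u') x & ncoins x = 2.
Proof.
move=> uC u'C; rewrite -(nth_index 0 uC) -(nth_index 0 u'C).
move: uC u'C; rewrite -!index_mem => uC u'C.
have x_rep := rep_incr (rep_incr (rep_nseq0 C) uC) u'C.
exists (incr_nth (incr_nth (nseq (size C) 0) (index u C)) (index u' C)) => //.
by rewrite !ncoins_incr ?size_incr_nth ?size_nseq ?uC ?u'C // /ncoins sumn_nseq.
Qed.

Lemma grd0 C : grd C 0 = 0.
Proof. by rewrite /grd; elim: (rev C) => //= c s; rewrite div0n mod0n. Qed.

Lemma grd_rcons C c v : grd (rcons C c) v = v %/ c + grd C (v %% c).
Proof. by rewrite /grd rev_rcons. Qed.

Lemma grd_rcons_small C c v : v < c -> grd (rcons C c) v = grd C v.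
Proof. by move=> v_lt; rewrite grd_rcons divn_small // modn_small. Qed.

Lemma grd_rcons_step C c v :
  0 < c -> c <= v -> grd (rcons C c) v = (grd (rcons C c) (v - c)).+1.
Proof.
move=> c_gt0 c_le; rewrite !grd_rcons -{1 2}(subnK c_le) divnDr ?dvdnn // divnn c_gt0.
by rewrite modnDr addn1.
Qed.

Lemma grd_rep C v : head 0 C = 1 -> exists2 x, is_rep C v x & ncoins x = grd C v.
Proof.
case: C => //= _ C ->; elim/last_ind: C v => [|C c IH] v.
  exists [:: v]; last by rewrite /ncoins /grd /= divn1 !addn0.
  by split; rewrite // big_ord1 mul1n.
have [x x_rep x_grd] := IH (v %% c); rewrite -rcons_cons.
exists (rcons x (v %/ c)); first by rewrite {1}(divn_eq v c) addnC mulnC; apply: rep_rcons.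
by rewrite grd_rcons /ncoins sumn_rcons -/(ncoins x) x_grd addnC.
Qed.

Lemma grd_gt0 C v : 0 < v -> 0 < grd (1 :: C) v.
Proof.
elim/last_ind: C v => [|C c IH] v v_gt0; first by rewrite /grd /= divn1 addn0.
rewrite -rcons_cons grd_rcons; case: (posnP (v %/ c)) => [q0|]; last by move/ltn_addr->.
have v_eq : v %% c = v by rewrite {2}(divn_eq v c) q0.
by rewrite q0 v_eq IH.
Qed.

Lemma grd_le1_mem C v : 0 < v -> grd (1 :: C) v <= 1 -> v \in 1 :: C.
Proof.
elim/last_ind: C v => [|C c IH] v v_gt0.
  by rewrite /grd /= divn1 addn0 inE eqn_leq v_gt0 andbT.
rewrite -rcons_cons grd_rcons mem_rcons inE.
case: (posnP (v %/ c)) => [q0|q_gt0] grd_le.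
  have v_eq : v %% c = v by rewrite {2}(divn_eq v c) q0.
  by rewrite (IH v) ?orbT // -v_eq; move: grd_le; rewrite q0.
have r0 : v %% c = 0.
  by case: (posnP (v %% c)) => // /(grd_gt0 C); move: grd_le; lia.
by rewrite {1}(divn_eq v c) r0 addn0 (_ : v %/ c = 1) ?mul1n ?eqxx //; lia.
Qed.

Lemma divn_eq1 a b : b <= a < b.*2 -> a %/ b = 1.
Proof.
case: b => [|b] ab; first by lia.
by apply/eqP; rewrite eqn_leq -ltnS ltn_divLR // leq_divRL //; lia.
Qed.

Definition ceil_div v m := (v + m.-1) %/ m.

Lemma ceil_div0 m : ceil_div 0 m = 0.
Proof. by case: m => [|m]; rewrite /ceil_div ?divn0 // add0n divn_small. Qed.

Lemma ceil_div_le1 v m : v <= m -> ceil_div v m <= 1.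
Proof. by case: m => [|m] v_le; rewrite /ceil_div ?divn0 // -ltnS ltn_divLR; lia. Qed.

Lemma leq_ceil_div v v' m : v <= v' -> ceil_div v m <= ceil_div v' m.
Proof. by move=> v_le; rewrite /ceil_div leq_div2r // leq_add2r. Qed.

Lemma leq_ceil_divS v v' k m :
  v' <= v + k -> k <= m -> ceil_div v' m <= (ceil_div v m).+1.
Proof.
move=> v'_le; case: m => [|m] k_le; rewrite /ceil_div ?divn0 //.
apply: leq_trans (leq_div2r _ (_ : _ <= v + m + 1 * m.+1)) _; first by lia.
by rewrite divnDMl // addn1.
Qed.

Lemma grd_iota m v : 0 < m -> grd (iota 1 m) v = ceil_div v m.
Proof.
case: m => // m _; rewrite /ceil_div; elim: m v => [|m IH] v; first by rewrite /grd /= !addn0 !divn1.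
rewrite -[m.+2]addn1 iotaD cats1 grd_rcons IH !addn1 add1n /=.
rewrite [in RHS](divn_eq v m.+2) -addnA divnMDl //; congr (_ + _).
have := ltn_mod v m.+2; case: (posnP (v %% m.+2)) => [->|r_gt0 r_lt].
  by rewrite !divn_small.
by rewrite !divn_eq1 //; lia.
Qed.

Lemma counterexample_of_rep C w x :
  is_rep C w x -> ncoins x < grd C w -> counterexample C w.
Proof.
move=> x_rep x_lt; pose has_rep k := exists y, is_rep C w y /\ ncoins y = k.
have [k [[y [y_rep y_k]] k_min]] := ex_minimal (ex_intro _ x (conj x_rep erefl) : has_rep _).
split; first by case: (posnP w) x_lt => // ->; rewrite grd0.
exists k; split; last by have := k_min _ (ex_intro _ x (conj x_rep erefl)); lia.
by split=> [|z z_rep]; [exists y | apply: k_min; exists z].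
Qed.

Lemma canonicalP C : canonical C <-> forall w x, is_rep C w x -> grd C w <= ncoins x.
Proof.
split=> [C_can w x x_rep | grd_le w [_ [k [[[x [x_rep <-]] _] x_lt]]]].
  by rewrite leqNgt; apply/negP => /(counterexample_of_rep x_rep); apply: C_can.
by have := grd_le w x x_rep; lia.
Qed.

Lemma noncanonicalP C :
  noncanonical C <-> exists w x, is_rep C w x /\ ncoins x < grd C w.
Proof.
split=> [[w [_ [k [[[x [x_rep <-]] _] x_lt]]]] | [w [x [x_rep x_lt]]]].
  by exists w, x.
by exists w; apply: counterexample_of_rep x_rep x_lt.
Qed.

Lemma minimal_counterexample C : noncanonical C ->
  exists w x, [/\ is_rep C w x, ncoins x < grd C w &
    forall w' y, w' < w -> is_rep C w' y -> grd C w' <= ncoins y].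
Proof.
case/noncanonicalP => w0 [x0 x0_bad].
pose bad w := exists x, is_rep C w x /\ ncoins x < grd C w.
have [w [[x [x_rep x_lt]] w_min]] := ex_minimal (ex_intro _ x0 x0_bad : bad w0).
exists w, x; split=> // w' y w'_lt y_rep; rewrite leqNgt; apply/negP => y_lt.
by have := w_min w' (ex_intro _ y (conj y_rep y_lt)); lia.
Qed.

Lemma canonical_of_grd_step C :
  (forall w u, u \in C -> u <= w -> grd C w <= (grd C (w - u)).+1) -> canonical C.
Proof.
move=> grd_step; apply/canonicalP => w x x_rep.
have [k x_k] : exists k, ncoins x = k by exists (ncoins x).
rewrite x_k; elim: k w x x_rep x_k => [|k IH] w x x_rep x_k.
all: case: (posnP w) => [->|w_gt0]; rewrite ?grd0 //.
all: have [i i_lt xi_gt0] := rep_pos x_rep w_gt0.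
all: have [y [y_rep x_y ui_le]] := rep_decr x_rep xi_gt0.
  by rewrite x_k in x_y.
apply: leq_trans (grd_step _ _ (mem_nth 0 i_lt) ui_le) _.
by rewrite ltnS (IH _ y) //; lia.
Qed.

Lemma canonical_grd_pair C u u' :
  canonical C -> u \in C -> u' \in C -> grd C (u + u') <= 2.
Proof.
by move=> /canonicalP C_can uC u'C; have [x x_rep <-] := rep_pair uC u'C; apply: C_can.
Qed.

Lemma noncanonical_of_grd_pair C u u' :
  u \in C -> u' \in C -> 2 < grd C (u + u') -> noncanonical C.
Proof.
move=> uC u'C grd_gt2; apply/noncanonicalP.
by have [x x_rep x2] := rep_pair uC u'C; exists (u + u'), x; rewrite x2.
Qed.

Lemma canonical_rcons_below C c w x :
  canonical (rcons C c) -> is_rep C w x -> w < c -> grd C w <= ncoins x.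
Proof.
move=> /canonicalP C_can x_rep w_lt; have := C_can _ _ (rep_rcons c 0 x_rep).
by rewrite muln0 addn0 grd_rcons_small // /ncoins sumn_rcons addn0.
Qed.

Lemma system_coin_gt0 C u : is_system C -> u \in C -> 0 < u.
Proof.
case: C => [|a C] //; rewrite /is_system /= => /andP[/eqP-> /(order_path_min ltn_trans)/allP C_gt1].
by rewrite inE => /orP[/eqP-> // | /C_gt1/ltnW].
Qed.

Section MinimalCounterexample.

Variables (C : seq nat) (d w : nat) (x : seq nat).
Local Notation D := (rcons C d).

Hypothesis D_system : is_system D.
Hypothesis w_min :
  forall w' y, w' < w -> is_rep D w' y -> grd D w' <= ncoins y.
Hypothesis x_rep : is_rep D w x.
Hypothesis x_bad : ncoins x < grd D w.

Let d_gt0 : 0 < d.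
Proof. by apply: system_coin_gt0 D_system _; rewrite mem_rcons mem_head. Qed.

Lemma min_counterexample_top_unused : nth 0 x (size C) = 0.
Proof.
case: (posnP (nth 0 x (size C))) => // xd_gt0.
have [y [y_rep x_y d_le]] := rep_decr x_rep xd_gt0.
rewrite nth_rcons ltnn eqxx in y_rep d_le.
have grd_wd : grd D (w - d) <= ncoins y by apply: w_min y_rep; lia.
have grd_w : grd D w = (grd D (w - d)).+1 by apply: grd_rcons_step.
by move: x_bad; rewrite grd_w; lia.
Qed.

Lemma min_counterexample_coin_bound i : 0 < nth 0 x i -> i < size C /\ w < nth 0 C i + d.
Proof.
move=> xi_gt0; have i_lt : i < size C.
  have := rep_used_lt x_rep xi_gt0; rewrite size_rcons ltnS leq_eqVlt.
  by case/orP=> [/eqP i_eq|//]; rewrite i_eq min_counterexample_top_unused in xi_gt0.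
have [y [y_rep x_y u_le]] := rep_decr x_rep xi_gt0.
rewrite nth_rcons i_lt in y_rep u_le; set u := nth 0 C i in y_rep u_le *.
split=> //; rewrite ltnNge; apply/negP => ud_le.
have u_gt0 : 0 < u by apply: system_coin_gt0 D_system _; rewrite mem_rcons inE mem_nth ?orbT.
have grd_wu : grd D (w - u) <= ncoins y by apply: w_min y_rep; lia.
(* Otherwise greedy pays [d] first on both [w] and [w - u], and adding [u] to a greedy
   representation of [w - u - d] gives [grd D w <= (grd D (w - u)).+1 <= ncoins x]. *)
have [z z_rep z_grd] : exists2 z, is_rep D (w - u - d) z & ncoins z = grd D (w - u - d).
  by apply: grd_rep; case/andP: D_system => /eqP.
have i_ltD : i < size D by rewrite size_rcons ltnS ltnW.
have z'_rep : is_rep D (w - d) (incr_nth z i).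
  by have := rep_incr z_rep i_ltD; rewrite nth_rcons i_lt (_ : w - u - d + u = w - d) //; lia.
have grd_wd : grd D (w - d) <= ncoins (incr_nth z i) by apply: w_min z'_rep; lia.
have [size_z _] := z_rep; rewrite ncoins_incr ?size_z // z_grd in grd_wd.
have grd_w : grd D w = (grd D (w - d)).+1 by apply: grd_rcons_step; lia.
have grd_w' : grd D (w - u) = (grd D (w - u - d)).+1 by apply: grd_rcons_step; lia.
by move: x_bad; rewrite grd_w; lia.
Qed.

End MinimalCounterexample.

(** * The systems (1, ..., m, b, b+1, 2b) *)

Section Backward.

Variables m b : nat.
Hypothesis m_gt1 : 1 < m.
Hypothesis b_gt : m.+1 < b.

Local Notation C1 := (rcons (rcons (iota 1 m) b) b.+1).
Local Notation C := (rcons C1 (2 * b)).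

Definition grd_rem r :=
  if r < b then ceil_div r m else if r == b then 1 else (ceil_div (r - b.+1) m).+1.

Let grd_rem_lt r : r < b -> grd_rem r = ceil_div r m.
Proof. by rewrite /grd_rem => ->. Qed.

Let grd_rem_b : grd_rem b = 1.
Proof. by rewrite /grd_rem ltnn eqxx. Qed.

Let grd_rem_gt r : b < r -> grd_rem r = (ceil_div (r - b.+1) m).+1.
Proof. by rewrite /grd_rem => b_lt; rewrite ltnNge ltnW //= gtn_eqF. Qed.

Let grd_C1 r : r < 2 * b -> grd C1 r = grd_rem r.
Proof.
move=> r_lt; have grd_I v : grd (iota 1 m) v = ceil_div v m by rewrite grd_iota //; lia.
case: (ltngtP r b) => [r_lt_b | b_lt_r | ->].
- by rewrite !grd_rcons_small ?grd_I ?grd_rem_lt //; lia.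
- by rewrite grd_rcons_step ?grd_rcons_small ?grd_I ?grd_rem_gt //; lia.
- by rewrite grd_rcons_small // grd_rcons_step ?subnn ?grd0 ?grd_rem_b //; lia.
Qed.

Let grd_C q r : r < 2 * b -> grd C (q * (2 * b) + r) = q + grd_rem r.
Proof.
move=> r_lt; elim: q => [|q IH]; first by rewrite grd_rcons_small ?grd_C1.
rewrite grd_rcons_step; [|lia|lia].
by rewrite (_ : _ - _ = q * (2 * b) + r) ?IH // mulSn; lia.
Qed.

Let mem_C u : u \in C -> [\/ 0 < u <= m, u = b, u = b.+1 | u = 2 * b].
Proof.
rewrite !(mem_rcons, inE) mem_iota.
by case/or4P=> [/eqP|/eqP|/eqP|]; [constructor 4 | constructor 3 | constructor 2 | constructor 1; lia].
Qed.

Let grd_rem_sub u r :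
  u \in C -> u <= r -> r < 2 * b -> grd_rem r <= (grd_rem (r - u)).+1.
Proof.
case/mem_C=> [/andP[u_gt0 u_le] | -> | -> | ->] u_le_r r_lt; last by lia.
- case: (ltngtP r b) => [r_lt_b | b_lt_r | ->]; last by rewrite grd_rem_b.
    by rewrite !grd_rem_lt; [apply: leq_ceil_divS u_le; lia | lia | lia].
  rewrite grd_rem_gt // ltnS; case: (ltngtP (r - u) b) => [ru_lt | ru_gt | ru_b].
  + by rewrite grd_rem_lt //; apply: leq_ceil_div; lia.
  + by rewrite grd_rem_gt //; apply: leq_ceil_divS u_le; lia.
  + by rewrite ru_b grd_rem_b; apply: ceil_div_le1; lia.
- case: (ltngtP r b) => [|b_lt_r | ->]; [lia | | by rewrite grd_rem_b].
  by rewrite grd_rem_gt // grd_rem_lt ?ltnS; [apply: leq_ceil_div | ]; lia.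
- by rewrite grd_rem_gt ?grd_rem_lt; lia.
Qed.

Let grd_rem_wrap u r : u \in C -> r < u -> grd_rem r <= grd_rem (2 * b + r - u).
Proof.
case/mem_C=> [/andP[u_gt0 u_le] | -> | -> | ->] r_lt.
- rewrite grd_rem_lt ?grd_rem_gt; [|lia|lia].
  by apply: leq_trans (ceil_div_le1 _) _; lia.
- rewrite grd_rem_lt //; case: (posnP r) => [->|r_gt0]; first by rewrite ceil_div0.
  by rewrite grd_rem_gt; [apply: leq_ceil_divS (_ : 1 <= m); lia | lia].
- case: (posnP r) => [->|r_gt0]; first by rewrite (grd_rem_lt (_ : 0 < b)) ?ceil_div0 //; lia.
  case: (ltngtP r 1) => [|r_gt1|->]; first by lia.
  + rewrite [X in _ <= X]grd_rem_gt; last by lia.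
    case: (ltngtP r b) => [r_lt_b||->]; [|lia|by rewrite grd_rem_b].
    by rewrite grd_rem_lt //; apply: leq_ceil_divS (_ : 2 <= m); lia.
  + have -> : 2 * b + 1 - b.+1 = b by lia.
    by rewrite grd_rem_b grd_rem_lt ?ceil_div_le1 //; lia.
- by rewrite (_ : 2 * b + r - 2 * b = r) //; lia.
Qed.

Lemma canonical_iota_top_pair : canonical C.
Proof.
apply: canonical_of_grd_step => w u uC u_le_w.
have u_le : u <= 2 * b by case/mem_C: (uC) => [/andP[_ ?]|->|->|->]; lia.
have r_lt : w %% (2 * b) < 2 * b by rewrite ltn_mod; lia.
move: u_le_w; rewrite (divn_eq w (2 * b)); set q := w %/ _; set r := w %% _ in r_lt *.
case: (leqP u r) => [u_le_r | r_lt_u] u_le_w.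
  have ru_lt : r - u < 2 * b by lia.
  rewrite -addnBA // !grd_C //.
  by have := grd_rem_sub uC u_le_r r_lt; lia.
have q_gt0 : 0 < q by case: (posnP q) u_le_w => // ->; lia.
have -> : q * (2 * b) + r - u = q.-1 * (2 * b) + (2 * b + r - u).
  by rewrite -[in LHS](prednK q_gt0) mulSn; lia.
rewrite !grd_C ?prednK //; last by lia.
by have := grd_rem_wrap uC r_lt_u; lia.
Qed.

Lemma noncanonical_iota_pair : noncanonical C1.
Proof.
have bC1 : b \in C1 by rewrite mem_rcons inE mem_rcons mem_head orbT.
apply: (noncanonical_of_grd_pair bC1 bC1).
rewrite grd_rcons_step ?grd_rcons_small ?grd_iota ?ltnS; try lia.
by rewrite /ceil_div leq_divRL; lia.
Qed.

End Backward.

(** * Systems with c_n = 2 c_(n-1) - c_2 *)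

Lemma iota_of_pred_closed (s : seq nat) : sorted ltn s -> 0 \notin s ->
  {in s, forall v, 1 < v -> v.-1 \in s} -> s = iota 1 (size s).
Proof.
elim/last_ind: s => [//|s L IH] sL_sorted.
rewrite mem_rcons inE eq_sym negb_or -lt0n => /andP[L_gt0 s0] sL_closed.
have s_lt : {in s, forall v, v < L}.
  move: sL_sorted; rewrite -cats1 (sorted_pairwise ltn_trans) pairwise_cat allrel1r.
  by case/and3P=> /allP.
have s_iota : s = iota 1 (size s).
  apply: IH => [|//|v vs v_gt1].
    by move: sL_sorted; rewrite -cats1 => /cat_sorted2[].
  have := sL_closed v; rewrite mem_rcons inE vs orbT => /(_ isT v_gt1).
  by rewrite mem_rcons inE => /orP[/eqP|//]; have := s_lt v vs; lia.
have size_lt : size s < L.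
  case: (posnP (size s)) => [->//|s_gt0].
  by apply: s_lt; rewrite {2}s_iota mem_iota; lia.
have L_le : L <= (size s).+1.
  case: (leqP L 1) => [|L_gt1]; first by lia.
  have := sL_closed L; rewrite mem_rcons mem_head => /(_ isT L_gt1).
  by rewrite mem_rcons inE {1}s_iota mem_iota => /orP[/eqP|]; lia.
rewrite size_rcons {1}s_iota (_ : L = (size s).+1); last by lia.
by rewrite -cats1 -(addn1 (size s)) iotaD add1n addn1.
Qed.

Section Forward.

Variables (c b d e : nat) (Q : seq nat).
Local Notation P := (1 :: c :: Q).
Local Notation C1 := (rcons (rcons P b) d).
Local Notation C := (rcons C1 e).

Hypothesis C_sorted : sorted ltn C.
Hypothesis e_def : e = 2 * d - c.
Hypothesis C_canonical : canonical C.

Let coin_order : [/\ 1 < c, b < d, d < e & {in c :: Q, forall u, c <= u < b}].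
Proof.
move: C_sorted; rewrite -!cats1 -!catA (sorted_pairwise ltn_trans) pairwise_cat.
case/and3P=> /allrelP P_lt /= /and3P[/andP[c_gt1 _] /allP Q_gt_c _].
case/and3P=> /and3P[b_lt_d _ _] /andP[d_lt_e _] _; split=> // u uP.
have uP' : u \in P by rewrite inE uP orbT.
rewrite (P_lt u b uP' (mem_head _ _)) andbT.
by case/predU1P: uP => [->|/Q_gt_c/ltnW].
Qed.

Let P_sorted : sorted ltn P.
Proof. by move: C_sorted; rewrite -!cats1 -!catA => /cat_sorted2[]. Qed.

Let C1_system : is_system C1.
Proof. by apply/andP; split=> //; move: C_sorted; rewrite -cats1 => /cat_sorted2[]. Qed.

Let mem_P u : u \in P -> u = 1 \/ c <= u < b.
Proof. by have [_ _ _ cQ_ge] := coin_order; rewrite inE => /predU1P[|/cQ_ge]; auto. Qed.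

Let grd_C1_below v : v < b -> grd C1 v = grd P v.
Proof. by move=> v_lt; have [_ b_lt_d _ _] := coin_order; rewrite !grd_rcons_small //; lia. Qed.

Let coin_plus_top u : u \in rcons P b -> e < u + d -> u + d = e.+1.
Proof.
have [c_gt1 b_lt_d d_lt_e _] := coin_order.
move=> uPb e_lt; have u_le_b : u <= b.
  by move: uPb; rewrite mem_rcons inE => /predU1P[->//|/mem_P]; lia.
have uC : u \in C by rewrite mem_rcons in_cons mem_rcons in_cons uPb !orbT.
have dC : d \in C by rewrite mem_rcons in_cons mem_rcons mem_head orbT.
have := canonical_grd_pair C_canonical uC dC.
rewrite grd_rcons_step; [|lia|lia].
rewrite grd_rcons_small; last by lia.
rewrite grd_C1_below ?ltnS => [grd_le1|]; last by lia.
have /mem_P : u + d - e \in P by apply: grd_le1_mem grd_le1; lia.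
by lia.
Qed.

Let forward_shape : noncanonical C1 -> [/\ c = 2, d = b.+1, e = 2 * b & 1 < grd P b.-1].
Proof.
have [c_gt1 b_lt_d d_lt_e cQ_ge] := coin_order; have /andP[_ c_lt_b] := cQ_ge c (mem_head _ _).
case/minimal_counterexample => w [x [x_rep x_bad w_min]].
have e_le_w : e <= w.
  rewrite leqNgt; apply/negP => w_lt.
  by have := canonical_rcons_below C_canonical x_rep w_lt; lia.
have [u u_def] : exists u, u = e.+1 - d by eexists.
have used_u i : 0 < nth 0 x i -> [/\ nth 0 C1 i = u, u \in rcons P b & w < u + d].
  move=> xi_gt0; have [i_lt w_lt] := min_counterexample_coin_bound C1_system w_min x_rep x_bad xi_gt0.
  have ud : nth 0 (rcons P b) i + d = e.+1 by apply: coin_plus_top; [apply: mem_nth | lia].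
  by rewrite nth_rcons i_lt u_def -ud addnK; split; rewrite ?mem_nth.
have w_gt0 : 0 < w by lia.
have [i _ /used_u[ui uPb w_lt]] := rep_pos x_rep w_gt0.
have w_u : w = u * ncoins x by apply: (rep_const_coin (u := u) x_rep) => j _ /used_u[].
have u_ge_c : c <= u <= b.
  by move: uPb; rewrite mem_rcons in_cons => /predU1P[->|/mem_P]; lia.
have k2 : ncoins x = 2 by nia.
have [c2 d_eq e_eq] : [/\ c = 2, d = b.+1 & e = 2 * b] by split; lia.
split=> //; move: x_bad; rewrite k2 grd_rcons_step; [|lia|lia].
have -> : w - d = b.-1 by lia.
by rewrite grd_C1_below; lia.
Qed.

Let pred_closed : d = b.+1 -> e = 2 * b -> {in P, forall v, 1 < v -> v.-1 \in P}.
Proof.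
move=> d_eq e_eq v vP v_gt1; have [|/andP[_ v_lt_b]] := mem_P vP; first by lia.
have vC : v \in C by rewrite mem_rcons in_cons mem_rcons in_cons mem_rcons in_cons vP !orbT.
have bC : b \in C by rewrite mem_rcons in_cons mem_rcons in_cons mem_rcons mem_head !orbT.
have := canonical_grd_pair C_canonical vC bC.
rewrite grd_rcons_small; last by lia.
rewrite grd_rcons_step; [|lia|lia].
rewrite grd_C1_below ?ltnS => [grd_le1|]; last by lia.
have -> : v.-1 = v + b - d by lia.
by apply: grd_le1_mem grd_le1; lia.
Qed.

Lemma shape_of_canonical_noncanonical_prefix : noncanonical C1 ->
  [/\ P = iota 1 (size P), d = b.+1, e = 2 * b & (size P).+1 < b].
Proof.
have [c_gt1 _ _ _] := coin_order.
case/forward_shape => c2 d_eq e_eq grd_gt1.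
have P_iota : P = iota 1 (size P).
  apply: iota_of_pred_closed P_sorted _ (pred_closed d_eq e_eq).
  by apply/negP => /mem_P; lia.
split=> //; move: grd_gt1; rewrite P_iota grd_iota // /ceil_div leq_divRL //= size_iota; lia.
Qed.

End Forward.

Lemma cat_last3E (s : seq nat) b d e (C := s ++ [:: b; d; e]) :
  [/\ nth 0 C (size s + 0) = b, nth 0 C (size s + 1) = d, nth 0 C (size s + 2) = e
    & take (size s + 2) C = s ++ [:: b; d]].
Proof.
rewrite /C takeD take_size_cat // drop_size_cat //.
by rewrite !nth_cat !ltnNge !leq_addr !addKn.
Qed.

Lemma split_head_last3 (C : seq nat) : 5 <= size C -> head 0 C = 1 ->
  exists c Q b d e, C = (1 :: c :: Q) ++ [:: b; d; e].
Proof.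
case/lastP: C => [//|C e]; case/lastP: C => [//|C d]; case/lastP: C => [//|C b].
case: C => [|a [|c Q]]; rewrite ?size_rcons //= => _ ->.
by exists c, Q, b, d, e; rewrite -!cats1 -!catA.
Qed.

Lemma canonical_noncanonical_prefixP c b d e (Q : seq nat) :
  sorted ltn ((1 :: c :: Q) ++ [:: b; d; e]) -> e = 2 * d - c ->
  canonical ((1 :: c :: Q) ++ [:: b; d; e]) /\ noncanonical ((1 :: c :: Q) ++ [:: b; d]) <->
  (1 :: c :: Q) ++ [:: b; d; e] = iota 1 (size Q).+2 ++ [:: b; b.+1; 2 * b] /\ (size Q).+3 < b.
Proof.
set P := 1 :: c :: Q; have -> : (size Q).+2 = size P by [].
have C_rcons : P ++ [:: b; d; e] = rcons (rcons (rcons P b) d) e by rewrite -!cats1 -!catA.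
have C1_rcons : P ++ [:: b; d] = rcons (rcons P b) d by rewrite -!cats1 -catA.
move=> C_sorted e_def; rewrite C_rcons in C_sorted; rewrite C1_rcons {1}C_rcons.
split=> [[C_can C1_noncan] | [C_eq b_gt]].
  have [P_iota d_eq e_eq b_gt] :=
    shape_of_canonical_noncanonical_prefix C_sorted e_def C_can C1_noncan.
  by rewrite -/P in P_iota b_gt; rewrite {1}P_iota d_eq e_eq.
move/eqP: C_eq; rewrite eqseq_cat ?size_iota // => /andP[/eqP P_iota /eqP[-> ->]].
rewrite P_iota; have P_gt1 : 1 < size P by [].
by split; [apply: canonical_iota_top_pair | apply: noncanonical_iota_pair]; lia.
Qed.

Theorem theorem12 (n : nat) (C : seq nat) :
  5 <= n ->
  size C = n ->
  is_system C ->
  nth 0 C n.-1 = 2 * nth 0 C (n - 2) - nth 0 C 1 ->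
  (canonical C /\ noncanonical (take n.-1 C)) <->
  (C = iota 1 (n - 3) ++ [:: nth 0 C (n - 3); (nth 0 C (n - 3)).+1;
                             2 * nth 0 C (n - 3)]
   /\ n - 2 < nth 0 C (n - 3)).
Proof.
move=> n_ge5 size_C /andP[/eqP C_head C_sorted]; subst n.
have [c [Q [b [d [e C_eq]]]]] := split_head_last3 n_ge5 C_head; subst C.
set P := 1 :: c :: Q.
have -> : size (P ++ [:: b; d; e]) = size P + 3 by rewrite size_cat.
have -> : (size P + 3).-1 = size P + 2 by lia.
have -> : size P + 3 - 2 = size P + 1 by lia.
have -> : size P + 3 - 3 = size P + 0 by lia.
have [-> -> -> ->] := cat_last3E P b d e.
by move=> e_def; rewrite canonical_noncanonical_prefixP // addn0 addn1.
Qed.
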